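(* Let $\kappa$ be a weakly compact cardinal and let $A\subseteq\kappa$ be a non-stationary set of regular cardinals which is unbounded in $\kappa$. Then $\kappa\notin\operatorname{spec}(A)$. Therefore, if $\kappa$ is weakly compact and $A\subseteq\kappa$ is an unbounded set of regular cardinals, then $\kappa\in\operatorname{spec}(A)$ if and only if $A$ is stationary in $\kappa$.
   Context: For a set $A$ of regular cardinals, $\prod A$ is the set of functions $f$ with domain $A$ and $f(a)\in a$, ordered by pointwise domination. $\operatorname{spec}(A)$ is the set of regular cardinals $\lambda$ with $(\prod A,<)\geq_T\lambda$ in the Tukey order; equivalently, regular $\lambda$ such that there exists $\mathcal{F}\subseteq\prod A$ of size $\lambda$ such that every $\lambda$-sized subset of $\mathcal{F}$ is unbounded in $(\prod A,<)$. *)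

(* A cardinal kappa is represented by a type K with a strict well-order lt
   whose order type is an initial ordinal; ordinals below kappa are elements
   of K, and an element a : K is identified with the ordinal
   {b | lt b a}. *)

Set Implicit Arguments.

Record wellorder (K : Type) (lt : K -> K -> Prop) : Prop := {
  wo_irrefl : forall x, ~ lt x x;
  wo_trans : forall x y z, lt x y -> lt y z -> lt x z;
  wo_total : forall x y, lt x y \/ x = y \/ lt y x;
  wo_wf : well_founded lt }.

Definition equipotent {T U : Type} (A : T -> Prop) (B : U -> Prop) : Prop :=
  exists f : {x | A x} -> {y | B y},
    (forall x y, f x = f y -> x = y) /\ (forall y, exists x, f x = y).

Definition fullset (T : Type) : T -> Prop := fun _ => True.

Section Ord.
Variables (K : Type) (lt : K -> K -> Prop).

Definition seg (a : K) : K -> Prop := fun b => lt b a.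

Definition is_cardinal : Prop := forall a : K, ~ equipotent (seg a) (@fullset K).

Definition is_cardinal_elt (a : K) : Prop :=
  forall b, lt b a -> ~ equipotent (seg b) (seg a).

Definition infinite_set {T : Type} (S : T -> Prop) : Prop :=
  ~ exists n : nat, equipotent S (fun i : nat => i < n).

Definition regular_elt (a : K) : Prop :=
  is_cardinal_elt a /\ infinite_set (seg a) /\
  forall S : K -> Prop, (forall x, S x -> lt x a) ->
    (forall b, lt b a -> exists x, S x /\ (lt b x \/ b = x)) ->
    equipotent S (seg a).

(* kappa is weakly compact: uncountable cardinal with kappa -> (kappa)^2_2 *)
Definition weakly_compact : Prop :=
  is_cardinal /\
  (~ exists f : K -> nat, forall x y, f x = f y -> x = y) /\
  forall c : K -> K -> bool,
    exists H : K -> Prop, equipotent H (@fullset K) /\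
      exists i : bool, forall x y, H x -> H y -> lt x y -> c x y = i.

Definition unbounded_in_kappa (S : K -> Prop) : Prop :=
  forall b, exists x, S x /\ lt b x.

Definition closed_in_kappa (C : K -> Prop) : Prop :=
  forall a, (exists x, C x /\ lt x a) ->
    (forall b, lt b a -> exists x, C x /\ lt b x /\ lt x a) -> C a.

Definition club (C : K -> Prop) : Prop :=
  closed_in_kappa C /\ unbounded_in_kappa C.

Definition stationary (A : K -> Prop) : Prop :=
  forall C, club C -> exists x, A x /\ C x.

Definition prodA (A : K -> Prop) : Type :=
  forall a : {a | A a}, {b | lt b (proj1_sig a)}.

Definition dominated (A : K -> Prop) (f g : prodA A) : Prop :=
  forall a, lt (proj1_sig (f a)) (proj1_sig (g a)).

Definition bounded_in_prod (A : K -> Prop) (G : prodA A -> Prop) : Prop :=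
  exists g : prodA A, forall f, G f -> dominated f g.

(* kappa in spec(A) (using the equivalent characterization given in the
   paper): there is F of size kappa all of whose kappa-sized subsets are
   unbounded in (prod A, <). *)
Definition kappa_in_spec (A : K -> Prop) : Prop :=
  exists F : prodA A -> Prop, equipotent F (@fullset K) /\
    forall G : prodA A -> Prop, (forall f, G f -> F f) ->
      equipotent G (@fullset K) -> ~ bounded_in_prod G.

End Ord.

From Stdlib Require Import Classical ClassicalEpsilon FunctionalExtensionality.
From Stdlib Require Import ProofIrrelevance FinFun.

(* If A is stationary, the truncated constants c_al (with value al at every a > al in A)
   witness kappa in spec(A): a bound g of kappa many of them fails at a point a of A that
   is a limit of their indices, since some index lies strictly between g(a) and a.

   If A is non-stationary, enumerate a kappa-sized family as (f_x)_{x < kappa} and colour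
   pairs by the lexicographic order of the f_x.  On a homogeneous set H of size kappa the
   values f_x(a), x in H, stabilize from some beta(a) on, for every a in A: by induction
   the members of H eventually agree below a, beyond that point x |-> f_x(a) is monotone,
   and a monotone map into a < kappa is eventually constant (by well-foundedness when
   nonincreasing, by regularity of kappa when nondecreasing).  Take a club C disjoint
   from A and its club subset E closed under beta.  At a in A, E is bounded below a since
   a is not in C, so by regularity of a the values at a of the members of H indexed
   below a are bounded below a, while beyond a they equal the stable value.  Hence the
   members of H following the points of E form a bounded subfamily of size kappa. *)

Set Implicit Arguments.
Unset Strict Implicit.

Definition injects (X Y : Type) : Prop := exists f : X -> Y, Injective f.

Lemma injects_refl X : injects X X.
Proof. exists (fun x => x). now intros x y. Qed.

Lemma injects_trans X Y Z : injects X Y -> injects Y Z -> injects X Z.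
Proof. intros [f Hf] [g Hg]. exists (fun x => g (f x)). intros x y E. auto. Qed.

Lemma injects_empty X Y : (X -> False) -> injects X Y.
Proof. intros N. exists (fun x => False_rect Y (N x)). intros x. destruct (N x). Qed.

Lemma sig_eq {T} (P : T -> Prop) (x y : {a | P a}) : proj1_sig x = proj1_sig y -> x = y.
Proof. destruct x, y. apply subset_eq_compat. Qed.

Lemma injects_proj1 {T} (P : T -> Prop) : injects {x | P x} T.
Proof. exists (@proj1_sig _ _). intros x y. apply sig_eq. Qed.

Lemma injects_map {X Y} (P : X -> Prop) (Q : Y -> Prop) (f : X -> Y) :
  (forall x, P x -> Q (f x)) -> (forall x y, P x -> P y -> f x = f y -> x = y) ->
  injects {x | P x} {y | Q y}.
Proof.
  intros HPQ Hf. exists (fun x => exist Q (f (proj1_sig x)) (HPQ _ (proj2_sig x))).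
  intros [x Px] [y Py] E. apply sig_eq. apply (f_equal (@proj1_sig _ _)) in E.
  exact (Hf x y Px Py E).
Qed.

Lemma injects_subset {T} (P Q : T -> Prop) :
  (forall x, P x -> Q x) -> injects {x | P x} {x | Q x}.
Proof. intros H. apply (injects_map (f := fun x => x) H). auto. Qed.

Lemma injects_image {X Y} (P : X -> Prop) (Q : Y -> Prop) (f : X -> Y) :
  (forall y, Q y -> exists x, P x /\ f x = y) -> injects {y | Q y} {x | P x}.
Proof.
  intros H.
  assert (pre : forall y : {y | Q y}, {x | P x /\ f x = proj1_sig y})
    by (intros [y Qy]; apply constructive_indefinite_description, H, Qy).
  exists (fun y => exist P (proj1_sig (pre y)) (proj1 (proj2_sig (pre y)))).
  intros y1 y2 E. apply sig_eq. apply (f_equal (@proj1_sig _ _)) in E. simpl in E.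
  rewrite <- (proj2 (proj2_sig (pre y1))), <- (proj2 (proj2_sig (pre y2))), E. reflexivity.
Qed.

Lemma schroeder_bernstein {X Y} (f : X -> Y) (g : Y -> X) :
  Injective f -> Injective g -> exists h : X -> Y, Injective h /\ Surjective h.
Proof.
  intros Hf Hg.
  set (chain := fix chain n : X -> Prop := match n with
        | O => fun x => ~ exists y, g y = x
        | S n => fun x => exists x', chain n x' /\ g (f x') = x end).
  set (D x := exists n, chain n x).
  assert (ginv : forall x, ~ D x -> {y | g y = x}).
  { intros x Dx. apply constructive_indefinite_description, NNPP. intro N. apply Dx. now exists O. }
  set (h x := match excluded_middle_informative (D x) with
              | left _ => f x
              | right Dx => proj1_sig (ginv x Dx) end).
  exists h. split.
  - intros x x'. unfold h.
    destruct (excluded_middle_informative (D x)) as [Dx|Dx],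
      (excluded_middle_informative (D x')) as [Dx'|Dx'].
    + apply Hf.
    + destruct (ginv x' Dx') as [y Hy]. simpl. intros E. exfalso. apply Dx'.
      destruct Dx as [n Hn]. exists (S n), x. split; [exact Hn | congruence].
    + destruct (ginv x Dx) as [y Hy]. simpl. intros E. exfalso. apply Dx.
      destruct Dx' as [n Hn]. exists (S n), x'. split; [exact Hn | congruence].
    + destruct (ginv x Dx) as [y Hy], (ginv x' Dx') as [y' Hy']. simpl. congruence.
  - intros y. destruct (classic (D (g y))) as [[[|n] Hn]|Dgy].
    + exfalso. apply Hn. now exists y.
    + destruct Hn as [x [Hx E]]. apply Hg in E. subst y. exists x. unfold h.
      destruct excluded_middle_informative as [_|Dx]; [reflexivity|].
      exfalso. apply Dx. now exists n.
    + exists (g y). unfold h. destruct excluded_middle_informative as [|Dx]; [contradiction|].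
      destruct (ginv (g y) Dx) as [y' Hy']. simpl. now apply Hg.
Qed.

Lemma equipotent_iff_injects {T U} (S : T -> Prop) (R : U -> Prop) :
  equipotent S R <-> injects {x | S x} {y | R y} /\ injects {y | R y} {x | S x}.
Proof.
  split.
  - intros [f [Hf Hs]]. split; [now exists f|].
    destruct (choice _ Hs) as [g Hg]. exists g.
    intros y1 y2 E. rewrite <- (Hg y1), <- (Hg y2), E. reflexivity.
  - intros [[f Hf] [g Hg]]. exact (schroeder_bernstein Hf Hg).
Qed.

Lemma equipotent_fullset_iff_injects {T U} (S : T -> Prop) :
  equipotent S (@fullset U) <-> injects {x | S x} U /\ injects U {x | S x}.
Proof.
  assert (HU : injects U {y | @fullset U y}).
  { exists (fun y => exist (@fullset U) y I). intros y z E. now injection E. }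
  rewrite equipotent_iff_injects.
  split; intros [H1 H2]; split; eauto using injects_trans, injects_proj1.
Qed.

Section Kappa.
Variables (K : Type) (lt : K -> K -> Prop).
Hypothesis W : wellorder lt.

Local Notation "x < y" := (lt x y).
Local Notation "x <= y" := (lt x y \/ x = y).

Lemma lt_trans x y z : x < y -> y < z -> x < z.
Proof. apply (wo_trans W). Qed.

Lemma le_lt_trans x y z : x <= y -> y < z -> x < z.
Proof. intros [Hxy| ->] Hyz; [exact (lt_trans Hxy Hyz) | exact Hyz]. Qed.

Lemma lt_le_trans x y z : x < y -> y <= z -> x < z.
Proof. intros Hxy [Hyz| <-]; [exact (lt_trans Hxy Hyz) | exact Hxy]. Qed.

Lemma not_lt_le x y : ~ x < y -> y <= x.
Proof. intros N. destruct (wo_total W x y) as [H|[->|H]]; tauto. Qed.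

Lemma exists_minimal (P : K -> Prop) :
  (exists x, P x) -> exists m, P m /\ forall y, P y -> ~ y < m.
Proof.
  intros [x Px]. induction x as [x IH] using (well_founded_induction (wo_wf W)).
  destruct (classic (exists y, P y /\ y < x)) as [[y [Py Hyx]]|N].
  - exact (IH y Hyx Py).
  - exists x. split; [exact Px|]. intros y Py Hyx. eauto.
Qed.

Lemma segment_small a : is_cardinal lt -> ~ injects K {y | seg lt a y}.
Proof.
  intros HK Hi. apply (HK a), equipotent_fullset_iff_injects.
  split; [apply injects_proj1 | exact Hi].
Qed.

Lemma bounded_small (S : K -> Prop) b :
  is_cardinal lt -> (forall x, S x -> x < b) -> ~ injects K {x | S x}.
Proof.
  intros HK Hb Hi. apply (segment_small (a := b) HK).
  eapply injects_trans; [exact Hi | exact (injects_subset Hb)].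
Qed.

Definition limit_point (X : K -> Prop) (a : K) : Prop :=
  (exists x, X x /\ x < a) /\ forall b, b < a -> exists x, X x /\ b < x /\ x < a.

Lemma not_limit_point_bounded X a :
  (exists g, g < a) -> ~ limit_point X a ->
  exists g, g < a /\ forall d, X d -> d < a -> d <= g.
Proof.
  intros [g0 Hg0] NL.
  destruct (classic (exists x, X x /\ x < a)) as [Ex|NEx].
  - apply NNPP. intros N. apply NL. split; [exact Ex|]. intros b Hb.
    apply NNPP. intros Nb. apply N. exists b. split; [exact Hb|].
    intros d Xd Hd. apply not_lt_le. intros Hbd. apply Nb. eauto.
  - exists g0. split; [exact Hg0|]. intros d Xd Hd. exfalso. eauto.
Qed.

Lemma regular_nonempty a : regular_elt lt a -> exists x, x < a.
Proof.
  intros [_ [Hinf _]]. apply NNPP. intros N. apply Hinf. exists 0. apply equipotent_iff_injects.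
  split; apply injects_empty; [intros [x Hx]; eauto | intros [i Hi]; inversion Hi].
Qed.

Lemma regular_no_max a g : regular_elt lt a -> g < a -> exists g', g < g' /\ g' < a.
Proof.
  intros [_ [Hinf Hcof]] Hg. apply NNPP. intros N. apply Hinf. exists 1.
  assert (Hsing : equipotent (fun x => x = g) (seg lt a)).
  { apply Hcof; [now intros x -> |]. intros b Hb. exists g. split; [reflexivity|].
    apply not_lt_le. intros Hgb. eauto. }
  apply equipotent_iff_injects in Hsing as [_ Hsing]. apply equipotent_iff_injects. split.
  - eapply injects_trans; [exact Hsing|].
    exists (fun _ => exist (fun i => (i < 1)%nat) 0 (le_n 1)).
    intros [x Hx] [y Hy] _. apply sig_eq. simpl. congruence.
  - exists (fun _ => exist (seg lt a) g Hg). intros [i Hi] [j Hj] _. apply sig_eq. simpl.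
    inversion Hi as [|? Hi']; inversion Hj as [|? Hj'];
      [reflexivity | inversion Hj' | inversion Hi' ..].
Qed.

Lemma regular_upper_bound a x y :
  regular_elt lt a -> x < a -> y < a -> exists z, z < a /\ x < z /\ y < z.
Proof.
  intros Ha Hx Hy. destruct (wo_total W x y) as [Hxy|[<-|Hyx]].
  - destruct (regular_no_max Ha Hy) as [z [Hyz Hza]]. exists z. eauto using lt_trans.
  - destruct (regular_no_max Ha Hx) as [z [Hxz Hza]]. eauto.
  - destruct (regular_no_max Ha Hx) as [z [Hxz Hza]]. exists z. eauto using lt_trans.
Qed.

Lemma regular_bounded_of_small a g (S : K -> Prop) :
  regular_elt lt a -> g < a -> (forall x, S x -> x < a) ->
  injects {x | S x} {x | seg lt g x} -> exists b, b < a /\ forall x, S x -> x < b.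
Proof.
  intros [Hcard [_ Hcof]] Hga HS Hsmall. apply NNPP. intros NB.
  assert (Heq : equipotent S (seg lt a)).
  { apply Hcof; [exact HS|]. intros b Hb. apply NNPP. intros N. apply NB.
    exists b. split; [exact Hb|]. intros x Sx. apply NNPP. intros Nx. apply N.
    exists x. split; [exact Sx|]. destruct (not_lt_le Nx); auto. }
  apply (Hcard g Hga), equipotent_iff_injects. split.
  - apply injects_subset. intros x Hx. exact (lt_trans Hx Hga).
  - apply equipotent_iff_injects in Heq as [_ Heq]. exact (injects_trans Heq Hsmall).
Qed.

Lemma regular_image_bounded a (X : K -> Prop) (h : K -> K) :
  regular_elt lt a -> ~ limit_point X a -> (forall d, X d -> d < a -> h d < a) ->
  exists b, b < a /\ forall d, X d -> d < a -> h d < b.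
Proof.
  intros Ha NL Hh.
  destruct (not_limit_point_bounded (regular_nonempty Ha) NL) as [g [Hga Hg]].
  destruct (regular_no_max Ha Hga) as [g' [Hgg' Hg'a]].
  destruct (regular_bounded_of_small (S := fun v => exists d, X d /\ d < a /\ h d = v) Ha Hg'a)
    as [b [Hba Hb]].
  - intros v (d & Xd & Hd & <-). auto.
  - apply (injects_image (f := h)). intros v (d & Xd & Hd & <-).
    exists d. split; [exact (le_lt_trans (Hg d Xd Hd) Hgg') | reflexivity].
  - exists b. split; [exact Hba|]. intros d Xd Hd. apply Hb. eauto.
Qed.

Definition stabilizes_at (P : K -> Prop) (h : K -> K) (b : K) : Prop :=
  P b /\ forall x, P x -> b <= x -> h x = h b.

Lemma nonincreasing_stabilizes (P : K -> Prop) (h : K -> K) :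
  (exists x, P x) -> (forall x y, P x -> P y -> x < y -> h y <= h x) ->
  exists b, stabilizes_at P h b.
Proof.
  intros [x0 Px0] Hmono.
  destruct (@exists_minimal (fun v => exists x, P x /\ h x = v)) as [v [[b [Pb <-]] Hmin]];
    [eauto|].
  exists b. split; [exact Pb|]. intros x Px [Hbx| <-]; [|reflexivity].
  destruct (Hmono b x Pb Px Hbx) as [Hlt|E]; [exfalso | exact E].
  exact (Hmin _ (ex_intro _ x (conj Px eq_refl)) Hlt).
Qed.

Section WeaklyCompact.
Hypothesis WC : weakly_compact lt.
Hypothesis no_max : forall x, exists y, x < y.

Lemma kappa_inhabited : inhabited K.
Proof.
  destruct WC as [_ [Hunc _]]. apply NNPP. intros N. apply Hunc.
  exists (fun x => False_rect nat (N (inhabits x))). intros x. destruct (N (inhabits x)).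
Qed.

Lemma common_upper_bound x y : exists z, x < z /\ y < z.
Proof.
  destruct (wo_total W x y) as [Hxy|[<-|Hyx]].
  - destruct (no_max y) as [z Hz]. exists z. eauto using lt_trans.
  - destruct (no_max x) as [z Hz]. eauto.
  - destruct (no_max x) as [z Hz]. exists z. eauto using lt_trans.
Qed.

Lemma homogeneous_set (P : K -> K -> Prop) :
  exists H, injects K {x | H x} /\
    ((forall x y, H x -> H y -> x < y -> P x y) \/
     (forall x y, H x -> H y -> x < y -> ~ P x y)).
Proof.
  destruct WC as [_ [_ Hpartition]].
  destruct (Hpartition (fun x y => if excluded_middle_informative (P x y) then true else false))
    as [H [HK [i Hhom]]].
  exists H. split; [apply equipotent_fullset_iff_injects in HK; apply HK|].
  destruct i; [left|right]; intros x y Hx Hy Hxy;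
    specialize (Hhom x y Hx Hy Hxy); destruct excluded_middle_informative; easy.
Qed.

Lemma not_bounded_unbounded (S : K -> Prop) :
  ~ (exists b, forall x, S x -> x < b) -> unbounded_in_kappa lt S.
Proof.
  intros NB b. destruct (no_max b) as [z Hbz]. apply NNPP. intros N. apply NB.
  exists z. intros x Sx. apply NNPP. intros Nx. apply N.
  exists x. split; [exact Sx | exact (lt_le_trans Hbz (not_lt_le Nx))].
Qed.

(* Regularity of kappa from kappa -> (kappa)^2_2: colour x < y by whether the chosen
   elements of S above x and above y coincide. *)
Lemma bounded_of_small (T : Type) (S : K -> Prop) :
  ~ injects K T -> injects {x | S x} T -> exists b, forall x, S x -> x < b.
Proof.
  intros NT HS. apply NNPP. intros NB.
  destruct (choice _ (not_bounded_unbounded NB)) as [above Habove].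
  destruct (homogeneous_set (fun x y => above x = above y)) as [H [HK [Hconst|Hinj]]].
  - destruct kappa_inhabited as [k0]. destruct HK as [e He]. destruct (e k0) as [x0 Hx0].
    apply (bounded_small (S := H) (b := above x0) (proj1 WC)); [|exists e; exact He].
    intros y Hy. destruct (wo_total W y x0) as [L|[->|L]].
    + rewrite <- (Hconst y x0 Hy Hx0 L). apply Habove.
    + apply Habove.
    + rewrite (Hconst x0 y Hx0 Hy L). apply Habove.
  - apply NT. eapply injects_trans; [exact HK|]. eapply injects_trans; [|exact HS].
    apply (injects_map (f := above)); [intros x _; apply Habove|].
    intros x y Hx Hy E. destruct (wo_total W x y) as [L|[?|L]]; [|assumption|];
      exfalso; [exact (Hinj x y Hx Hy L E) | exact (Hinj y x Hy Hx L (eq_sym E))].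
Qed.

Lemma unbounded_iff_injects (S : K -> Prop) :
  unbounded_in_kappa lt S <-> injects K {x | S x}.
Proof.
  split.
  - intros US. apply NNPP. intros N. destruct (bounded_of_small N (injects_refl _)) as [b Hb].
    destruct (US b) as [x [Sx Hbx]]. exact (wo_irrefl W b (lt_trans Hbx (Hb x Sx))).
  - intros HK. apply not_bounded_unbounded. intros [b Hb]. exact (bounded_small (proj1 WC) Hb HK).
Qed.

Lemma image_segment_bounded (f : K -> K) b : exists c, forall x, x < b -> f x < c.
Proof.
  destruct (@bounded_of_small _ (fun y => exists x, x < b /\ f x = y)
              (segment_small (a := b) (proj1 WC)))
    as [c Hc].
  - apply (injects_image (f := f)). intros y (x & Hx & <-). eauto.
  - exists c. eauto.
Qed.

Lemma sequence_bounded (s : nat -> K) : exists c, forall n, s n < c.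
Proof.
  destruct (@bounded_of_small nat (fun y => exists n, s n = y)) as [c Hc].
  - intros [f Hf]. apply (proj1 (proj2 WC)). now exists f.
  - eapply injects_trans; [|apply (injects_proj1 (@fullset nat))].
    apply (injects_image (f := s)). intros y [n <-]. now exists n.
  - exists c. eauto.
Qed.

Lemma limit_of_iterates (step : K -> K) b :
  (forall x, x < step x) -> exists d, b < d /\ forall x, x < d -> exists y, x < y /\ step y < d.
Proof.
  intros Hstep. set (s n := Nat.iter n step b).
  destruct (@exists_minimal (fun c => forall n, s n < c) (sequence_bounded s)) as [d [Hd Hmin]].
  exists d. split; [exact (Hd 0)|]. intros x Hx.
  assert (Hn : exists n, ~ s n < x).
  { apply NNPP. intros N. apply (Hmin x); [|exact Hx]. intros n. apply NNPP. eauto. }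
  destruct Hn as [n Hn]. exists (s (S n)). split; [|exact (Hd (S (S n)))].
  exact (le_lt_trans (not_lt_le Hn) (Hstep (s n))).
Qed.

Lemma limit_points_club (X : K -> Prop) : unbounded_in_kappa lt X -> club lt (limit_point X).
Proof.
  intros UX. split.
  - intros a [d [[[x [Xx Hxd]] _] Hda]] Hlim. split; [exists x; eauto using lt_trans|].
    intros b Hb. destruct (Hlim b Hb) as (d' & [_ Hd'] & Hbd' & Hd'a).
    destruct (Hd' b Hbd') as (x' & Xx' & Hbx' & Hx'd'). eauto using lt_trans.
  - intros b. destruct (choice _ UX) as [next Hnext].
    destruct (limit_of_iterates b (fun x => proj2 (Hnext x))) as [d [Hbd Hd]].
    exists d. split; [split|exact Hbd].
    + destruct (Hd b Hbd) as (y & _ & Hy). exists (next y). split; [apply Hnext | exact Hy].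
    + intros x Hx. destruct (Hd x Hx) as (y & Hxy & Hy). exists (next y).
      split; [apply Hnext|]. split; [exact (lt_trans Hxy (proj2 (Hnext y))) | exact Hy].
Qed.

Lemma closure_points_club (f : K -> K) : club lt (fun d => forall x, x < d -> f x < d).
Proof.
  split.
  - intros a _ Hlim x Hx. destruct (Hlim x Hx) as (d & Hd & Hxd & Hda).
    exact (lt_trans (Hd x Hxd) Hda).
  - intros b.
    assert (Hbound : forall y, exists c, y < c /\ forall x, x < y -> f x < c).
    { intros y. destruct (image_segment_bounded f y) as [c Hc].
      destruct (common_upper_bound y c) as [z [Hyz Hcz]]. eauto using lt_trans. }
    destruct (choice _ Hbound) as [step Hstep].
    destruct (limit_of_iterates b (fun y => proj1 (Hstep y))) as [d [Hbd Hd]].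
    exists d. split; [|exact Hbd]. intros x Hx. destruct (Hd x Hx) as (y & Hxy & Hy).
    exact (lt_trans (proj2 (Hstep y) x Hxy) Hy).
Qed.

Lemma club_inter (C1 C2 : K -> Prop) : club lt C1 -> club lt C2 -> club lt (fun x => C1 x /\ C2 x).
Proof.
  intros [C1cl C1un] [C2cl C2un]. split.
  - intros a [x [[C1x C2x] Hx]] Hlim. split; [apply C1cl | apply C2cl]; eauto;
      intros b Hb; destruct (Hlim b Hb) as (y & [C1y C2y] & Hby & Hya); eauto.
  - intros b. destruct (choice _ C1un) as [next1 H1]. destruct (choice _ C2un) as [next2 H2].
    destruct (limit_of_iterates (step := fun x => next1 (next2 x)) b) as [d [Hbd Hd]].
    { intros x. exact (lt_trans (proj2 (H2 x)) (proj2 (H1 _))). }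
    exists d. split; [split|exact Hbd].
    + apply C1cl.
      * destruct (Hd b Hbd) as (y & _ & Hy). exists (next1 (next2 y)). split; [apply H1 | exact Hy].
      * intros x Hx. destruct (Hd x Hx) as (y & Hxy & Hy). exists (next1 (next2 y)).
        split; [apply H1|]. split; [|exact Hy].
        exact (lt_trans Hxy (lt_trans (proj2 (H2 y)) (proj2 (H1 _)))).
    + apply C2cl.
      * destruct (Hd b Hbd) as (y & _ & Hy). exists (next2 y).
        split; [apply H2 | exact (lt_trans (proj2 (H1 _)) Hy)].
      * intros x Hx. destruct (Hd x Hx) as (y & Hxy & Hy). exists (next2 y).
        split; [apply H2|].
        split; [exact (lt_trans Hxy (proj2 (H2 y))) | exact (lt_trans (proj2 (H1 _)) Hy)].
Qed.

Lemma nondecreasing_bounded_stabilizes (P : K -> Prop) (h : K -> K) a :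
  unbounded_in_kappa lt P -> (forall x, P x -> h x < a) ->
  (forall x y, P x -> P y -> x < y -> h x <= h y) -> exists b, stabilizes_at P h b.
Proof.
  intros UP Hbelow Hmono.
  assert (Hjump : forall v, exists x, (exists y, P y /\ v < h y) -> P x /\ v < h x).
  { intros v. destruct (classic (exists y, P y /\ v < h y)) as [[y Hy]|N];
      [exists y | exists v]; tauto. }
  destruct (choice _ Hjump) as [jump Hjump'].
  destruct (image_segment_bounded jump a) as [c Hc].
  destruct (UP c) as [b [Pb Hcb]].
  exists b. split; [exact Pb|]. intros x Px Hbx.
  destruct (wo_total W (h x) (h b)) as [L|[E|L]]; [exfalso | exact E | exfalso].
  - destruct Hbx as [Hbx| <-]; [|exact (wo_irrefl W _ L)].
    exact (wo_irrefl W _ (le_lt_trans (Hmono _ _ Pb Px Hbx) L)).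
  - destruct (Hjump' (h b) (ex_intro _ x (conj Px L))) as [Pj Hj].
    pose proof (lt_trans (Hc _ (Hbelow b Pb)) Hcb) as Hjb.
    exact (wo_irrefl W _ (lt_le_trans Hj (Hmono _ _ Pj Pb Hjb))).
Qed.

Section Spectrum.
Variable A : K -> Prop.
Hypothesis A_regular : forall a, A a -> regular_elt lt a.
Hypothesis A_unbounded : unbounded_in_kappa lt A.

Definition const_below (z0 : prodA lt A) (c : K) : prodA lt A :=
  fun a => match excluded_middle_informative (c < proj1_sig a) with
           | left h => exist _ c h
           | right _ => z0 a
           end.

Lemma const_below_value z0 c a : c < proj1_sig a -> proj1_sig (const_below z0 c a) = c.
Proof. intros h. unfold const_below. now destruct excluded_middle_informative. Qed.

Lemma const_below_inj z0 : Injective (const_below z0).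
Proof.
  intros c c' E. destruct (common_upper_bound c c') as [z [Hcz Hc'z]].
  destruct (A_unbounded z) as [a [Aa Hza]].
  pose proof (f_equal (fun f => proj1_sig (f (exist A a Aa))) E) as E'. cbv beta in E'.
  rewrite !const_below_value in E' by eauto using lt_trans; exact E'.
Qed.

Lemma prodA_inhabited : inhabited (prodA lt A).
Proof.
  constructor. intros a. apply constructive_indefinite_description, regular_nonempty, A_regular.
  exact (proj2_sig a).
Qed.

Lemma stationary_spec : stationary lt A -> kappa_in_spec lt A.
Proof.
  intros Hstat. destruct prodA_inhabited as [z0].
  set (F f := exists c, f = const_below z0 c).
  exists F. split.
  - apply equipotent_fullset_iff_injects. split.
    + eapply injects_trans; [|apply (injects_proj1 (@fullset K))].
      apply (injects_image (f := const_below z0)). intros f [c ->]. now exists c.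
    + exists (fun c => exist F (const_below z0 c) (ex_intro _ c eq_refl)).
      intros c c' E. apply const_below_inj with z0. exact (f_equal (@proj1_sig _ _) E).
  - intros G HGF HG [g Hg].
    set (X c := G (const_below z0 c)).
    assert (UX : unbounded_in_kappa lt X).
    { apply unbounded_iff_injects. apply equipotent_fullset_iff_injects in HG as [_ HG].
      eapply injects_trans; [exact HG|]. apply (injects_image (f := const_below z0)).
      intros f Gf. destruct (HGF f Gf) as [c ->]. now exists c. }
    destruct (Hstat _ (limit_points_club UX)) as [a [Aa [_ Hlim]]].
    set (a' := exist A a Aa).
    destruct (Hlim _ (proj2_sig (g a'))) as (c & Xc & Hgc & Hca).
    specialize (Hg _ Xc a'). rewrite const_below_value in Hg by exact Hca.
    exact (wo_irrefl W c (lt_trans Hg Hgc)).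
Qed.

Section Lexicographic.
Variable V : K -> K -> K.
Hypothesis V_below : forall x a, A a -> V x a < a.
Hypothesis V_separates : forall x y, x <> y -> exists a, A a /\ V x a <> V y a.

Definition agree_below x y a := forall a', A a' -> a' < a -> V x a' = V y a'.

Definition lex_lt x y := exists a, A a /\ agree_below x y a /\ V x a < V y a.

Lemma lex_lt_total x y : x <> y -> lex_lt x y \/ lex_lt y x.
Proof.
  intros Hxy.
  destruct (exists_minimal (V_separates Hxy)) as [a [[Aa Ha] Hmin]].
  assert (Hag : agree_below x y a).
  { intros a' Aa' Ha'. apply NNPP. intros N. exact (Hmin a' (conj Aa' N) Ha'). }
  destruct (wo_total W (V x a) (V y a)) as [L|[E|L]]; [left | contradiction | right];
    exists a; repeat split; auto.
  intros a' Aa' Ha'. symmetry. auto.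
Qed.

Lemma lex_lt_le x y a : lex_lt x y -> A a -> agree_below x y a -> V x a <= V y a.
Proof.
  intros [a0 [Aa0 [Hag0 H0]]] Aa Hag. destruct (wo_total W a0 a) as [L|[<-|L]].
  - exfalso. rewrite (Hag a0 Aa0 L) in H0. exact (wo_irrefl W _ H0).
  - now left.
  - right. exact (Hag0 a Aa L).
Qed.

Definition lex_monotone (H : K -> Prop) (R : K -> K -> Prop) :=
  forall x y a, H x -> H y -> x < y -> A a -> agree_below x y a -> R (V x a) (V y a).

Lemma lex_homogeneous_set : exists H, unbounded_in_kappa lt H /\
  (lex_monotone H (fun u v => u <= v) \/ lex_monotone H (fun u v => v <= u)).
Proof.
  destruct (homogeneous_set lex_lt) as [H [HK [Hlex|Hnlex]]];
    exists H; (split; [now apply unbounded_iff_injects|]).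
  - left. intros x y a Hx Hy Hxy Aa Hag. exact (lex_lt_le (Hlex x y Hx Hy Hxy) Aa Hag).
  - right. intros x y a Hx Hy Hxy Aa Hag.
    assert (Hne : x <> y) by (intros ->; exact (wo_irrefl W _ Hxy)).
    destruct (lex_lt_total Hne) as [L|L]; [exfalso; exact (Hnlex x y Hx Hy Hxy L)|].
    apply (lex_lt_le L Aa). intros a' Aa' Ha'. symmetry. exact (Hag a' Aa' Ha').
Qed.

Lemma lex_monotone_stabilizes H : unbounded_in_kappa lt H ->
  lex_monotone H (fun u v => u <= v) \/ lex_monotone H (fun u v => v <= u) ->
  forall a, A a -> exists b, stabilizes_at H (fun x => V x a) b.
Proof.
  intros UH Hmono a. induction a as [a IH] using (well_founded_induction (wo_wf W)). intros Aa.
  assert (Hprev : forall a', exists b, A a' -> a' < a -> stabilizes_at H (fun x => V x a') b).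
  { intros a'. destruct (classic (A a' /\ a' < a)) as [[Aa' Ha']|N].
    - destruct (IH a' Ha' Aa') as [b Hb]. eauto.
    - exists a'. tauto. }
  destruct (choice _ Hprev) as [beta Hbeta].
  destruct (image_segment_bounded beta a) as [b0 Hb0].
  set (P x := H x /\ b0 < x).
  assert (UP : unbounded_in_kappa lt P).
  { intros b. destruct (common_upper_bound b b0) as [z [Hbz Hb0z]].
    destruct (UH z) as [x [Hx Hzx]]. exists x. split; [split|]; eauto using lt_trans. }
  assert (Hagree : forall x y, P x -> P y -> agree_below x y a).
  { intros x y [Hx Hb0x] [Hy Hb0y] a' Aa' Ha'. destruct (Hbeta a' Aa' Ha') as [_ Hconst].
    rewrite (Hconst x Hx), (Hconst y Hy); [reflexivity | left; eauto using lt_trans ..]. }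
  assert (HP : exists b, stabilizes_at P (fun x => V x a) b).
  { destruct Hmono as [Hup|Hdown].
    - apply (@nondecreasing_bounded_stabilizes _ _ a UP); [intros x _; exact (V_below x Aa)|].
      intros x y Px Py Hxy. apply Hup; auto; [apply Px | apply Py].
    - apply nonincreasing_stabilizes; [destruct (UP a) as [x [Px _]]; eauto|].
      intros x y Px Py Hxy. apply Hdown; auto; [apply Px | apply Py]. }
  destruct HP as [b [[Hb Hb0b] Hconst]].
  exists b. split; [exact Hb|]. intros x Hx Hbx. apply Hconst; [split; [exact Hx|] | exact Hbx].
  exact (lt_le_trans Hb0b Hbx).
Qed.

Lemma nonstationary_family_bounded C : club lt C -> (forall a, A a -> ~ C a) ->
  exists E, unbounded_in_kappa lt E /\
    forall a, A a -> exists y, y < a /\ forall x, E x -> V x a < y.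
Proof.
  intros [Ccl Cun] HAC.
  destruct lex_homogeneous_set as [H [UH Hmono]].
  assert (Hstab : forall a, exists b, A a -> stabilizes_at H (fun x => V x a) b).
  { intros a. destruct (classic (A a)) as [Aa|N].
    - destruct (lex_monotone_stabilizes UH Hmono Aa) as [b Hb]. eauto.
    - exists a. tauto. }
  destruct (choice _ Hstab) as [beta Hbeta].
  destruct (choice _ UH) as [next Hnext].
  set (E0 d := C d /\ forall x, x < d -> beta x < d).
  assert (E0club : club lt E0)
    by (apply club_inter; [split; assumption | apply closure_points_club]).
  exists (fun x => exists d, E0 d /\ x = next d). split.
  - intros b. destruct (proj2 E0club b) as [d [E0d Hbd]].
    exists (next d). split; [eauto | exact (lt_trans Hbd (proj2 (Hnext d)))].
  - intros a Aa.
    assert (NL : ~ limit_point E0 a).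
    { intros [[x [E0x Hx]] Hlim]. apply (HAC a Aa), Ccl; [exists x; split; [apply E0x | exact Hx]|].
      intros b Hb. destruct (Hlim b Hb) as (d & E0d & Hbd).
      exists d. split; [apply E0d | exact Hbd]. }
    destruct (regular_image_bounded (h := fun d => V (next d) a) (A_regular Aa) NL) as [b [Hba Hb]];
      [intros d _ _; exact (V_below _ Aa)|].
    destruct (Hbeta a Aa) as [_ Hconst].
    destruct (regular_upper_bound (A_regular Aa) Hba (V_below (beta a) Aa))
      as (y & Hya & Hby & Hvy).
    exists y. split; [exact Hya|]. intros x [d [E0d ->]].
    destruct (wo_total W d a) as [L|[->|L]].
    + exact (lt_trans (Hb d E0d L) Hby).
    + exfalso. exact (HAC a Aa (proj1 E0d)).
    + rewrite (Hconst (next d)); [exact Hvy | apply Hnext |].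
      left. exact (lt_trans (proj2 E0d a L) (proj2 (Hnext d))).
Qed.

End Lexicographic.

(* The value [a] off [A] is arbitrary. *)
Definition prod_value (f : prodA lt A) (a : K) : K :=
  match excluded_middle_informative (A a) with
  | left h => proj1_sig (f (exist A a h))
  | right _ => a
  end.

Lemma prod_value_eq f a (h : A a) : prod_value f a = proj1_sig (f (exist A a h)).
Proof.
  unfold prod_value. destruct excluded_middle_informative as [h'|]; [|contradiction].
  now rewrite (proof_irrelevance _ h h').
Qed.

Lemma prod_value_lt f a : A a -> prod_value f a < a.
Proof. intros h. rewrite (prod_value_eq f h). exact (proj2_sig (f (exist A a h))). Qed.

Lemma prod_value_inj f g : (forall a, A a -> prod_value f a = prod_value g a) -> f = g.
Proof.
  intros E. apply functional_extensionality_dep. intros [a h]. apply sig_eq.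
  rewrite <- !prod_value_eq. exact (E a h).
Qed.

Lemma nonstationary_not_spec : ~ stationary lt A -> ~ kappa_in_spec lt A.
Proof.
  intros NS [F [HF Hspec]].
  assert (HC : exists C, club lt C /\ forall a, A a -> ~ C a).
  { apply not_all_ex_not in NS as [C NC]. apply imply_to_and in NC as [HC NC].
    exists C. split; [exact HC|]. intros a Aa Ca. eauto. }
  destruct HC as [C [HC HAC]].
  apply equipotent_fullset_iff_injects in HF as [_ [e He]].
  set (u x := proj1_sig (e x)).
  assert (u_inj : Injective u) by (intros x y E; apply He, sig_eq, E).
  set (V x a := prod_value (u x) a).
  assert (V_separates : forall x y, x <> y -> exists a, A a /\ V x a <> V y a).
  { intros x y Hxy. apply NNPP. intros N. apply Hxy, u_inj, prod_value_inj.
    intros a Aa. apply NNPP. intros N'. apply N. eauto. }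
  destruct (nonstationary_family_bounded (fun x a => @prod_value_lt (u x) a) V_separates HC HAC)
    as [E [UE Hbound]].
  assert (g : forall a : {a | A a},
               {y | y < proj1_sig a /\ forall x, E x -> V x (proj1_sig a) < y}).
  { intros [a Aa]. apply constructive_indefinite_description, Hbound, Aa. }
  apply (Hspec (fun f => exists x, E x /\ f = u x)).
  - intros f [x [_ ->]]. exact (proj2_sig (e x)).
  - apply equipotent_fullset_iff_injects. split.
    + eapply injects_trans; [|apply (injects_proj1 E)].
      apply (injects_image (f := u)). intros f [x [Ex ->]]. eauto.
    + eapply injects_trans; [apply unbounded_iff_injects, UE|].
      apply (injects_map (f := u)); [eauto | intros x y _ _; apply u_inj].
  - exists (fun a => exist _ (proj1_sig (g a)) (proj1 (proj2_sig (g a)))).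
    intros f [x [Ex ->]] [a Aa]. simpl.
    pose proof (proj2 (proj2_sig (g (exist A a Aa))) x Ex) as Hx. simpl in Hx.
    unfold V in Hx. rewrite (prod_value_eq _ Aa) in Hx. exact Hx.
Qed.

End Spectrum.
End WeaklyCompact.
End Kappa.

Theorem theorem4p2 (K : Type) (lt : K -> K -> Prop) :
  wellorder lt -> weakly_compact lt ->
  forall A : K -> Prop,
    (forall a, A a -> regular_elt lt a) ->
    unbounded_in_kappa lt A ->
    (~ stationary lt A -> ~ kappa_in_spec lt A) /\
    (kappa_in_spec lt A <-> stationary lt A).
Proof.
  intros W WC A HA UA.
  assert (no_max : forall x, exists y, lt x y) by (intros x; destruct (UA x) as [a [_ Hxa]]; eauto).
  pose proof (nonstationary_not_spec W WC no_max HA) as Hnonstat.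
  split; [exact Hnonstat|]. split.
  - intros Hspec. apply NNPP. intros NS. exact (Hnonstat NS Hspec).
  - exact (stationary_spec W WC no_max HA UA).
Qed.
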